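(* Let $\Omega\subset\mathbb{R}^3$ be the open octahedron with vertices $\pm e_1,\pm e_2,\pm e_3$ ($e_m$ the unit vectors), and let $\mathcal{T}$ be its partition into the eight congruent tetrahedra each of which is the convex hull of one 2-face of $\Omega$ and the origin. Define the piecewise constant function $\bar q_h(x)=\operatorname{sgn}(x_1)\operatorname{sgn}(x_2)\operatorname{sgn}(x_3)$ for $x=(x_1,x_2,x_3)\in\Omega$. Then $\bar q_h\in\mathcal{L}^0_0(\mathcal{T})\cap L^2_0(\Omega)$ and \[\langle\operatorname{div}v_h,\bar q_h\rangle=0\qquad\text{for all } v_h\in\mathcal{L}^1_2(\mathcal{T};\mathbb{R}^3)\cap W^{1,1}_0(\Omega;\mathbb{R}^3).\]
   Context: $\mathcal{L}^s_k(\mathcal{T})$ denotes the space of functions in $W^{s,1}(\Omega)$ that are piecewise polynomials of degree at most $k$ on $\mathcal{T}$ (so $\mathcal{L}^0_0(\mathcal{T})$ are piecewise constants and $\mathcal{L}^1_2(\mathcal{T};\mathbb{R}^3)$ are continuous piecewise quadratic vector fields). $L^2_0(\Omega)$ is the space of $L^2$ functions with zero mean, and $\langle\cdot,\cdot\rangle$ the $L^2(\Omega)$ inner product. *)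

From HB Require Import structures.
From mathcomp Require Import all_boot all_order all_algebra.
From mathcomp Require Import all_classical all_reals all_analysis.
Set Implicit Arguments. Unset Strict Implicit. Unset Printing Implicit Defensive.
Import Order.TTheory GRing.Theory Num.Theory.
Import numFieldNormedType.Exports.
Local Open Scope classical_set_scope.
Local Open Scope ring_scope.

Section Octa.
Variable R : realType.

Definition X1 (x : R * R * R) : R := x.1.1.
Definition X2 (x : R * R * R) : R := x.1.2.
Definition X3 (x : R * R * R) : R := x.2.

Definition leb3 := (((@lebesgue_measure R) \x (@lebesgue_measure R)) \x (@lebesgue_measure R))%E.

Definition Omega : set (R * R * R) := [set x | `|X1 x| + `|X2 x| + `|X3 x| < 1].

Definition sgnb (b : bool) : R := if b then 1 else -1.

(* closed tetrahedron: convex hull of the origin and the 2-face of Omega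
   lying in the octant with signs (sgnb b1, sgnb b2, sgnb b3) *)
Definition tetra (b1 b2 b3 : bool) : set (R * R * R) :=
  [set x | 0 <= sgnb b1 * X1 x /\ 0 <= sgnb b2 * X2 x /\ 0 <= sgnb b3 * X3 x /\
           sgnb b1 * X1 x + sgnb b2 * X2 x + sgnb b3 * X3 x <= 1].

Definition P2 (p : R * R * R -> R) : Prop :=
  exists c a1 a2 a3 b11 b22 b33 b12 b13 b23 : R, forall x,
    p x = c + a1 * X1 x + a2 * X2 x + a3 * X3 x
          + b11 * X1 x ^+ 2 + b22 * X2 x ^+ 2 + b33 * X3 x ^+ 2
          + b12 * X1 x * X2 x + b13 * X1 x * X3 x + b23 * X2 x * X3 x.

(* scalar component of an element of L^1_2(T): on each closed tetrahedron it
   coincides with a polynomial of degree <= 2 (a single function agreeing with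
   the pieces on the closed cells is exactly a continuous piecewise quadratic) *)
Definition L12 (f : R * R * R -> R) : Prop :=
  forall b1 b2 b3 : bool, exists p, P2 p /\ forall x, tetra b1 b2 b3 x -> f x = p x.

Definition zero_on_bd (f : R * R * R -> R) : Prop :=
  forall x, `|X1 x| + `|X2 x| + `|X3 x| = 1 -> f x = 0.

(* divergence of (v1, v2, v3), computed with classical partial derivatives
   (which coincide a.e. with the weak ones for continuous piecewise polynomials) *)
Definition div3 (v1 v2 v3 : R * R * R -> R) (x : R * R * R) : R :=
  derive1 (fun t => v1 ((t, X2 x), X3 x)) (X1 x)
  + derive1 (fun t => v2 ((X1 x, t), X3 x)) (X2 x)
  + derive1 (fun t => v3 ((X1 x, X2 x), t)) (X3 x).

Definition qbar (x : R * R * R) : R := Num.sg (X1 x) * Num.sg (X2 x) * Num.sg (X3 x).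

End Octa.

From HB Require Import structures.
From mathcomp Require Import all_boot all_order all_algebra.
From mathcomp Require Import all_classical all_reals all_analysis.
From mathcomp Require Import measurable_realfun ring lra.
Set Implicit Arguments. Unset Strict Implicit. Unset Printing Implicit Defensive.
Import Order.TTheory GRing.Theory Num.Theory.
Import numFieldNormedType.Exports.
Local Open Scope classical_set_scope.
Local Open Scope ring_scope.

(* On the tetrahedron T_b of the octant with signs b, qbar is the constant
   s_b = sgnb b1 * sgnb b2 * sgnb b3, so <div v, qbar> = sum_b s_b \int_{T_b} div v, and by the
   divergence theorem each term is a sum of face integrals of v.n. The outer faces lie on the
   boundary of Omega, where v vanishes; every other face lies in a coordinate plane and is shared
   by two tetrahedra of opposite sign, so these contributions cancel in pairs. On each open tetrahedron div v * qbar is affine in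
   |x1|, |x2|, |x3|, and Tonelli's theorem gives its integral. Since v is quadratic on T_b, the
   edge-midpoint rule integrates it exactly over the faces, which turns that integral into a
   combination of values of v at midpoints of edges of T_b. The midpoints on the boundary of Omega
   contribute nothing and the remaining terms cancel in the sum over the eight octants. *)

Section sgnb_lemmas.
Variable R : realType.

Lemma sgnb_sqr b : sgnb R b * sgnb R b = 1.
Proof. by case: b; rewrite /sgnb ?mulr1 ?mulrNN ?mulr1. Qed.

Lemma normr_sgnb b : `|sgnb R b| = 1.
Proof. by case: b; rewrite /sgnb ?normrN normr1. Qed.

Lemma sgnb_gt0_mul (a : R) : sgnb R (0 < a) * a = `|a|.
Proof.
rewrite /sgnb; case: ifPn => [a0|]; first by rewrite mul1r gtr0_norm.
by rewrite -leNgt mulN1r => /ler0_norm.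
Qed.

Lemma sgr_sgnb (a : R) : a != 0 -> Num.sg a = sgnb R (0 < a).
Proof. by case: (ltgtP a 0) => // a0 _; rewrite /sgnb ?(gtr0_sg a0) ?(ltr0_sg a0). Qed.

Lemma sgnb_gt0_mul_norm (a : R) : sgnb R (0 < a) * `|a| = a.
Proof. by rewrite -sgnb_gt0_mul mulrA sgnb_sqr mul1r. Qed.

Lemma sgnb_mul_gt0_sgr b (a : R) : 0 < sgnb R b * a -> Num.sg a = sgnb R b.
Proof.
by case: b; rewrite /sgnb /= ?mul1r ?mulN1r ?oppr_gt0; [move=> /gtr0_sg|move=> /ltr0_sg].
Qed.

Lemma near_sgnb_gt0 b (a : R) :
  (\forall t \near a, 0 <= sgnb R b * t) -> 0 < sgnb R b * a.
Proof.
move=> /nbhs_ballP[e e0 ae]; have e2 : 0 < e / 2 by rewrite divr_gt0.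
have /ae : ball a e (a - sgnb R b * (e / 2)).
  by rewrite /ball /= opprB addrC subrK normrM normr_sgnb mul1r gtr0_norm //; lra.
rewrite /= mulrBr mulrA sgnb_sqr mul1r subr_ge0; exact: lt_le_trans.
Qed.

End sgnb_lemmas.

(** * Integrals of octant-wise affine functions *)

Section slice_integrals.
Variable R : realType.
Local Notation mu := (@lebesgue_measure R).

Lemma integral_itv_deriv_poly (Q : {poly R}) (a b : R) : a < b ->
  (\int[mu]_(t in `]a, b[) (Q^`()).[t]%:E = (Q.[b] - Q.[a])%:E)%E.
Proof.
move=> ab; rewrite -(@integral_itv_bndoo _ _ _ _ true false); last first.
  apply/measurable_EFinP/measurable_funTS.
  by apply: continuous_measurable_fun; exact: continuous_horner.
rewrite (@continuous_FTC2 _ (horner Q^`()) (horner Q)) ?EFinB //.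
- by apply: continuous_subspaceT; exact: continuous_horner.
- split; first by move=> x _; exact: derivable_horner.
  + exact/cvg_at_right_filter/continuous_horner.
  + exact/cvg_at_left_filter/continuous_horner.
- by move=> x _; rewrite -derivE.
Qed.

Lemma integral_sign_slice (Q : {poly R}) (s : bool) (a : R) : 0 < a ->
  (\int[mu]_t (if (0 < sgnb R s * t) && (`|t| < a) then (Q^`()).[`|t|] else 0)%:E
   = (Q.[a] - Q.[0])%:E)%E.
Proof.
move=> a0; case: s.
- rewrite (_ : (fun t => _) = (fun t => (Q^`()).[t]%:E) \_ `]0, a[); last first.
    apply/funext => t; rewrite patchE mem_setE in_itv /= /sgnb mul1r.
    by case: (ltrP 0 t) => t0 /=; rewrite ?gtr0_norm //; case: ifP.
  by rewrite -integral_mkcond integral_itv_deriv_poly.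
- pose P := - (Q \Po - 'X).
  have PE t : P.[t] = - Q.[- t] by rewrite /P hornerN horner_comp hornerN hornerX.
  have P'E t : (P^`()).[t] = (Q^`()).[- t].
    by rewrite /P derivN deriv_comp derivN derivX mulrN1 opprK horner_comp hornerN hornerX.
  rewrite (_ : (fun t => _) = (fun t => (P^`()).[t]%:E) \_ `]- a, 0[); last first.
    apply/funext => t; rewrite patchE mem_setE in_itv /= /sgnb mulN1r oppr_gt0 P'E.
    case: (ltrP t 0) => t0 /=; rewrite ?andbF // ltr0_norm // ltrNl andbT.
    by case: ifP.
  by rewrite -integral_mkcond integral_itv_deriv_poly ?oppr_lt0 // !PE !opprK oppr0 addrC.
Qed.

Lemma integral_sign_slice_cubic (s : bool) (a d0 d1 d2 d3 : R) :
  (\int[mu]_t (if (0 < sgnb R s * t) && (`|t| < a)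
               then d0 + d1 * `|t| + d2 * `|t| ^+ 2 + d3 * `|t| ^+ 3 else 0)%:E
   = (if 0 < a then d0 * a + d1 / 2 * a ^+ 2 + d2 / 3 * a ^+ 3 + d3 / 4 * a ^+ 4
      else 0)%:E)%E.
Proof.
have [a0|a0] := ltrP 0 a; last first.
  rewrite (_ : (fun t => _) = cst 0%E) ?integral0 // funeqE => t.
  by rewrite (_ : `|t| < a = false) ?andbF //; apply/negbTE; rewrite -leNgt (le_trans a0).
pose Q : {poly R} := d0 *: 'X + (d1 / 2) *: 'X^2 + (d2 / 3) *: 'X^3 + (d3 / 4) *: 'X^4.
have Q'E u : (Q^`()).[u] = d0 + d1 * u + d2 * u ^+ 2 + d3 * u ^+ 3.
  by rewrite /Q !derivD !derivZ derivX !derivXn !hornerE /=; field.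
under eq_fun do rewrite -Q'E.
by rewrite integral_sign_slice // /Q !hornerD !hornerZ !hornerX !hornerXn; congr EFin; ring.
Qed.
End slice_integrals.

Section product_sigma_finite.
Local Open Scope ereal_scope.

Context {d1 d2 : measure_display} {T1 : measurableType d1} {T2 : measurableType d2}
  {R : realType}.
Variables (m1 : {sigma_finite_measure set T1 -> \bar R})
          (m2 : {sigma_finite_measure set T2 -> \bar R}).

(* Needed for Tonelli's theorem on [leb3 = (leb \x leb) \x leb]; the library proves it only
   inside a section, so it exports no such instance. *)
Lemma product_measure1_sigma_finite : sigma_finite setT (m1 \x m2).
Proof.
have /sigma_finiteP[F [TF ndF Ffin]] := sigma_finiteT m1.
have /sigma_finiteP[G [TG ndG Gfin]] := sigma_finiteT m2.
exists (fun n => F n `*` G n).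
  apply/seteqP; split=> [[x y] _|]; last by [].
  have [[i _ Fx] [j _ Gy]] : (\bigcup_n F n) x /\ (\bigcup_n G n) y by rewrite -TF -TG.
  exists (maxn i j) => //; split.
  - exact: subsetPset (ndF _ _ (leq_maxl i j)) _ Fx.
  - exact: subsetPset (ndG _ _ (leq_maxr i j)) _ Gy.
move=> n; have [mF Fn] := Ffin n; have [mG Gn] := Gfin n.
split; first exact: measurableX.
by rewrite product_measure1E // lte_mul_pinfty // ge0_fin_numE.
Qed.
End product_sigma_finite.

Definition lebesgue2 (R : realType) := ((@lebesgue_measure R) \x (@lebesgue_measure R))%E.
HB.instance Definition _ (R : realType) := Measure.on (@lebesgue2 R).
HB.instance Definition _ (R : realType) :=
  Measure_isSigmaFinite.Build _ _ _ (@lebesgue2 R) (product_measure1_sigma_finite _ _).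

Lemma sum_octants {V : nmodType} (F : bool -> bool -> bool -> V) :
  \sum_(b : bool * bool * bool) F b.1.1 b.1.2 b.2
  = \sum_(b1 : bool) \sum_(b2 : bool) \sum_(b3 : bool) F b1 b2 b3.
Proof.
rewrite -(pair_bigA _ (fun p b3 => F p.1 p.2 b3)).
by rewrite -(pair_bigA _ (fun b1 b2 => \sum_(b3 : bool) F b1 b2 b3)).
Qed.

Section octant_geometry.
Variable R : realType.
Implicit Types x : R * R * R.
Local Notation Omega := (@Omega R).

Definition l1norm x : R := `|X1 x| + `|X2 x| + `|X3 x|.

Definition in_open_tetra b1 b2 b3 x : bool :=
  [&& 0 < sgnb R b1 * X1 x, 0 < sgnb R b2 * X2 x, 0 < sgnb R b3 * X3 x & l1norm x < 1].

Definition tetra_affine b1 b2 b3 (c0 c1 c2 c3 : R) x : R :=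
  if in_open_tetra b1 b2 b3 x then c0 + c1 * `|X1 x| + c2 * `|X2 x| + c3 * `|X3 x| else 0.

Lemma measurable_X1 : measurable_fun setT (@X1 R).
Proof. exact: measurableT_comp measurable_fst measurable_fst. Qed.

Lemma measurable_X2 : measurable_fun setT (@X2 R).
Proof. exact: measurableT_comp measurable_snd measurable_fst. Qed.

Lemma measurable_X3 : measurable_fun setT (@X3 R).
Proof. exact: measurable_snd. Qed.

Lemma measurable_abs_X1 : measurable_fun setT (fun x => `|X1 x|).
Proof. by apply: measurableT_comp measurable_X1; exact: normr_measurable. Qed.

Lemma measurable_abs_X2 : measurable_fun setT (fun x => `|X2 x|).
Proof. by apply: measurableT_comp measurable_X2; exact: normr_measurable. Qed.

Lemma measurable_abs_X3 : measurable_fun setT (fun x => `|X3 x|).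
Proof. by apply: measurableT_comp measurable_X3; exact: normr_measurable. Qed.

Lemma measurable_l1norm : measurable_fun setT l1norm.
Proof.
by apply: measurable_funD; [apply: measurable_funD|];
  [exact: measurable_abs_X1|exact: measurable_abs_X2|exact: measurable_abs_X3].
Qed.

Lemma measurable_Omega : measurable Omega.
Proof.
have := measurable_fun_ltr measurable_l1norm (measurable_cst (1 : R)) measurableT.
by move=> /(_ [set true] I); rewrite setTI.
Qed.

Lemma measurable_tetra_affine b1 b2 b3 c0 c1 c2 c3 :
  measurable_fun setT (tetra_affine b1 b2 b3 c0 c1 c2 c3).
Proof.
apply: measurable_fun_ifT.
- have mlt (f : R * R * R -> R) :
      measurable_fun setT f -> measurable_fun setT (fun x => 0 < f x).
    by move=> mf; apply: measurable_fun_ltr.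
  repeat apply: measurable_and; try apply: mlt; try apply: measurable_funM => //;
    [exact: measurable_X1|exact: measurable_X2|exact: measurable_X3|].
  exact: measurable_fun_ltr measurable_l1norm _.
- apply: measurable_funD; [apply: measurable_funD; [apply: measurable_funD|]|];
    [by []|apply: measurable_funM _ measurable_abs_X1|
     apply: measurable_funM _ measurable_abs_X2|apply: measurable_funM _ measurable_abs_X3] => //.
- exact: measurable_cst.
Qed.

Section tetra_affine_integral.
Variables (b1 b2 b3 : bool) (c0 c1 c2 c3 : R).
Local Notation mu := (@lebesgue_measure R).
Local Notation f := (tetra_affine b1 b2 b3 c0 c1 c2 c3).

Let slice12 (y : R * R) : R :=
  let r := 1 - `|y.1| - `|y.2| in
  if [&& 0 < sgnb R b1 * y.1, 0 < sgnb R b2 * y.2 & 0 < r]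
  then (c0 + c1 * `|y.1| + c2 * `|y.2|) * r + c3 / 2 * r ^+ 2 else 0.

Let slice1 (x : R) : R :=
  let r := 1 - `|x| in
  if (0 < sgnb R b1 * x) && (0 < r)
  then (c0 + c1 * `|x|) * r ^+ 2 / 2 + (c2 + c3) / 6 * r ^+ 3 else 0.

Lemma integral_tetra_affine_x3 y : (\int[mu]_t (f (y, t))%:E = (slice12 y)%:E)%E.
Proof.
case: y => y1 y2; rewrite /slice12 /=; set r := 1 - `|y1| - `|y2|.
have [/andP[s1 s2]|/negbTE s12] := boolP ((0 < sgnb R b1 * y1) && (0 < sgnb R b2 * y2)).
  rewrite s1 s2 /= (_ : (fun t => _) = fun t =>
    (if (0 < sgnb R b3 * t) && (`|t| < r) then (c0 + c1 * `|y1| + c2 * `|y2|) + c3 * `|t|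
       + 0 * `|t| ^+ 2 + 0 * `|t| ^+ 3 else 0)%:E).
    by rewrite integral_sign_slice_cubic; case: ifP => // _; congr EFin; field.
  apply/funext => t; rewrite /tetra_affine /in_open_tetra /l1norm /X1 /X2 /X3 /= s1 s2 /=.
  rewrite (_ : _ < 1 = (`|t| < r)); last by apply/idP/idP; rewrite /r => ?; lra.
  by case: ifP => // _; congr EFin; ring.
rewrite (_ : (fun t => _) = cst 0%E) ?integral0 ?andbA ?s12 // funeqE => t.
by rewrite /tetra_affine /in_open_tetra /X1 /X2 /= andbA s12.
Qed.

Lemma integral_slice12_x2 (u : R) : (\int[mu]_t (slice12 (u, t))%:E = (slice1 u)%:E)%E.
Proof.
rewrite /slice12 /slice1 /=; set r := 1 - `|u|; set B := c0 + c1 * `|u|.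
have [s1|/negbTE s1] := boolP (0 < sgnb R b1 * u); last first.
  by rewrite (_ : (fun t => _) = cst 0%E) ?integral0 // funeqE => t; rewrite s1.
rewrite /= (_ : (fun t => _) = fun t =>
  (if (0 < sgnb R b2 * t) && (`|t| < r) then (B * r + c3 / 2 * r ^+ 2)
     + (c2 * r - B - c3 * r) * `|t| + (c3 / 2 - c2) * `|t| ^+ 2 + 0 * `|t| ^+ 3 else 0)%:E).
  by rewrite integral_sign_slice_cubic; case: ifP => // _; congr EFin; field.
apply/funext => t /=; rewrite subr_gt0.
by case: ifP => // _; congr EFin; field.
Qed.

Lemma integral_slice1 : (\int[mu]_u (slice1 u)%:E = (c0 / 6 + (c1 + c2 + c3) / 24)%:E)%E.
Proof.
rewrite /slice1 (_ : (fun u => _) = fun t =>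
  (if (0 < sgnb R b1 * t) && (`|t| < 1) then (c0 / 2 + (c2 + c3) / 6)
     + ((c1 - 2 * c0) / 2 - (c2 + c3) / 2) * `|t|
     + ((c0 - 2 * c1) / 2 + (c2 + c3) / 2) * `|t| ^+ 2
     + (c1 / 2 - (c2 + c3) / 6) * `|t| ^+ 3 else 0)%:E).
  by rewrite integral_sign_slice_cubic ltr01; congr EFin; field.
apply/funext => t /=; rewrite subr_gt0.
by case: ifP => // _; congr EFin; field.
Qed.

Lemma tetra_affine_ge0 x : 0 <= c0 -> 0 <= c1 -> 0 <= c2 -> 0 <= c3 -> 0 <= f x.
Proof.
by move=> *; rewrite /tetra_affine; case: ifP => // _; rewrite !addr_ge0 // mulr_ge0.
Qed.

Lemma integral_tetra_affine_ge0 : 0 <= c0 -> 0 <= c1 -> 0 <= c2 -> 0 <= c3 ->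
  (\int[@leb3 R]_x (f x)%:E = (c0 / 6 + (c1 + c2 + c3) / 24)%:E)%E.
Proof.
move=> c0_ge0 c1_ge0 c2_ge0 c3_ge0.
have mf : measurable_fun setT (fun x => (f x)%:E).
  by apply/measurable_EFinP; exact: measurable_tetra_affine.
have f_ge0 x : (0 <= (f x)%:E)%E by rewrite lee_fin tetra_affine_ge0.
rewrite /leb3 -/(@lebesgue2 R) fubini_tonelli1 //.
under eq_integral => y _ do rewrite /fubini_F integral_tetra_affine_x3.
have slice12_ge0 y : (0 <= (slice12 y)%:E)%E.
  by rewrite -integral_tetra_affine_x3; apply: integral_ge0 => t _.
rewrite /lebesgue2 fubini_tonelli1 //; last first.
  rewrite (_ : (fun y => _) = fubini_F mu (fun x => (f x)%:E)).
    exact: measurable_fun_fubini_tonelli_F.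
  by apply/funext => y; rewrite /fubini_F integral_tetra_affine_x3.
under eq_integral => u _ do rewrite /fubini_F integral_slice12_x2.
exact: integral_slice1.
Qed.

End tetra_affine_integral.
Lemma integrable_tetra_affine_ge0 b1 b2 b3 c0 c1 c2 c3 :
  0 <= c0 -> 0 <= c1 -> 0 <= c2 -> 0 <= c3 ->
  (@leb3 R).-integrable setT (fun x => (tetra_affine b1 b2 b3 c0 c1 c2 c3 x)%:E).
Proof.
move=> *; apply/integrableP; split.
  by apply/measurable_EFinP; exact: measurable_tetra_affine.
under eq_integral => x _ do rewrite gee0_abs ?lee_fin ?tetra_affine_ge0 //.
by rewrite integral_tetra_affine_ge0 // ltry.
Qed.

(* Splits the coefficients into nonnegative parts, to which Tonelli's theorem applies. *)
Lemma tetra_affine_decomp b1 b2 b3 c0 c1 c2 c3 x :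
  tetra_affine b1 b2 b3 c0 c1 c2 c3 x =
  tetra_affine b1 b2 b3 `|c0| `|c1| `|c2| `|c3| x
  - tetra_affine b1 b2 b3 (`|c0| - c0) (`|c1| - c1) (`|c2| - c2) (`|c3| - c3) x.
Proof. by rewrite /tetra_affine; case: ifP => _; [ring|rewrite subr0]. Qed.

Section tetra_affine_signed.
Variables (b1 b2 b3 : bool) (c0 c1 c2 c3 : R).
Local Notation f := (tetra_affine b1 b2 b3 c0 c1 c2 c3).

Let abs_sub_ge0 (c : R) : 0 <= `|c| - c.
Proof. by rewrite subr_ge0 ler_norm. Qed.

Lemma integrable_tetra_affine : (@leb3 R).-integrable setT (fun x => (f x)%:E).
Proof.
under eq_fun => x do rewrite tetra_affine_decomp EFinB.
by apply: integrableB => //; apply: integrable_tetra_affine_ge0.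
Qed.

Lemma integral_tetra_affine :
  (\int[@leb3 R]_x (f x)%:E = (c0 / 6 + (c1 + c2 + c3) / 24)%:E)%E.
Proof.
under eq_integral => x _ do rewrite tetra_affine_decomp EFinB.
rewrite integralB_EFin //; try exact: integrable_tetra_affine_ge0.
by rewrite !integral_tetra_affine_ge0 //; congr EFin; ring.
Qed.
End tetra_affine_signed.

Lemma tetra_affine_out b1 b2 b3 c0 c1 c2 c3 x :
  ~ Omega x -> tetra_affine b1 b2 b3 c0 c1 c2 c3 x = 0.
Proof. by move=> xO; rewrite /tetra_affine; case: ifP => // /and4P[_ _ _]. Qed.

Definition octa_affine (C0 C1 C2 C3 : bool -> bool -> bool -> R) x : R :=
  if [&& X1 x != 0, X2 x != 0 & X3 x != 0] then
    let b1 := 0 < X1 x in let b2 := 0 < X2 x in let b3 := 0 < X3 x in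
    C0 b1 b2 b3 + C1 b1 b2 b3 * `|X1 x| + C2 b1 b2 b3 * `|X2 x| + C3 b1 b2 b3 * `|X3 x|
  else 0.

Section octa_affine_integral.
Variables C0 C1 C2 C3 : bool -> bool -> bool -> R.
Local Notation f := (octa_affine C0 C1 C2 C3).

Let piece b1 b2 b3 :=
  tetra_affine b1 b2 b3 (C0 b1 b2 b3) (C1 b1 b2 b3) (C2 b1 b2 b3) (C3 b1 b2 b3).

Lemma octa_affine_pieces x : Omega x -> f x = \sum_b piece b.1.1 b.1.2 b.2 x.
Proof.
move=> xO; rewrite (sum_octants (fun b1 b2 b3 => piece b1 b2 b3 x)) !big_bool.
rewrite /piece /octa_affine /tetra_affine /in_open_tetra /=.
rewrite -/(l1norm x) (_ : l1norm x < 1 = true); last exact/idP.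
rewrite /sgnb !mul1r !mulN1r !oppr_gt0 !andbT.
by case: (ltgtP (X1 x) 0); case: (ltgtP (X2 x) 0); case: (ltgtP (X3 x) 0) => * /=;
  rewrite ?addr0 ?add0r.
Qed.

Lemma integrable_octa_affine : (@leb3 R).-integrable Omega (fun x => (f x)%:E).
Proof.
apply: (eq_integrable (mu := @leb3 R) _ (fun x => \sum_b (piece b.1.1 b.1.2 b.2 x)%:E)).
- exact: measurable_Omega.
- by move=> x /[!inE] xO; rewrite sumEFin octa_affine_pieces.
apply: integrable_sum => [|b _]; first exact: measurable_Omega.
apply: (@integrableS _ _ _ _ setT) => //; first exact: measurable_Omega.
exact: integrable_tetra_affine.
Qed.

Let octant_integral b1 b2 b3 :=
  C0 b1 b2 b3 / 6 + (C1 b1 b2 b3 + C2 b1 b2 b3 + C3 b1 b2 b3) / 24.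

Lemma integral_octa_affine : (\int[@leb3 R]_(x in Omega) (f x)%:E =
  (\sum_(b1 : bool) \sum_(b2 : bool) \sum_(b3 : bool) octant_integral b1 b2 b3)%:E)%E.
Proof.
rewrite integral_mkcond (_ : _ \_ _ = fun x => \sum_b (piece b.1.1 b.1.2 b.2 x)%:E); last first.
  apply/funext => x; rewrite patchE sumEFin; case: ifPn => [|/negP]; rewrite inE => xO.
    by rewrite octa_affine_pieces.
  by rewrite big1 // => b _; rewrite /piece tetra_affine_out.
rewrite integral_sum //; last by move=> b; exact: integrable_tetra_affine.
rewrite -(sum_octants octant_integral) -sumEFin.
by apply: eq_bigr => b _; rewrite integral_tetra_affine.
Qed.
End octa_affine_integral.

End octant_geometry.

(** * Piecewise quadratic vector fields *)

Section quadratics.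
Variable R : realType.
Implicit Types x : R * R * R.
Local Notation Omega := (@Omega R).

Record quadratic := Quadratic {
  qc : R; q1 : R; q2 : R; q3 : R; q11 : R; q22 : R; q33 : R; q12 : R; q13 : R; q23 : R }.

Definition qeval (Q : quadratic) x : R :=
  qc Q + q1 Q * X1 x + q2 Q * X2 x + q3 Q * X3 x
  + q11 Q * X1 x ^+ 2 + q22 Q * X2 x ^+ 2 + q33 Q * X3 x ^+ 2
  + q12 Q * X1 x * X2 x + q13 Q * X1 x * X3 x + q23 Q * X2 x * X3 x.

Definition qd1 (Q : quadratic) x := q1 Q + 2 * q11 Q * X1 x + q12 Q * X2 x + q13 Q * X3 x.
Definition qd2 (Q : quadratic) x := q2 Q + 2 * q22 Q * X2 x + q12 Q * X1 x + q23 Q * X3 x.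
Definition qd3 (Q : quadratic) x := q3 Q + 2 * q33 Q * X3 x + q13 Q * X1 x + q23 Q * X2 x.

Lemma L12_quadratic (v : R * R * R -> R) : L12 v ->
  exists Q : bool -> bool -> bool -> quadratic,
    forall b1 b2 b3 x, tetra b1 b2 b3 x -> v x = qeval (Q b1 b2 b3) x.
Proof.
move=> vL12.
have /choice[Q vQ] : forall b : bool * bool * bool, exists Q : quadratic,
    forall x, tetra b.1.1 b.1.2 b.2 x -> v x = qeval Q x.
  move=> [[b1 b2] b3]; have [p [[c [a1 [a2 [a3 [b11 [b22 [b33 [b12 [b13 [b23 pE]]]]]]]]]] vp]] :=
    vL12 b1 b2 b3.
  by exists (Quadratic c a1 a2 a3 b11 b22 b33 b12 b13 b23) => x /vp ->; rewrite pE.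
by exists (fun b1 b2 b3 => Q (b1, b2, b3)) => b1 b2 b3 x /(vQ (b1, b2, b3)).
Qed.

Lemma cvg_line1 x : ((t, X2 x), X3 x) @[t --> X1 x] --> x.
Proof.
case: x => [[x1 x2] x3]; rewrite /X1 /X2 /X3 /=.
apply: (cvg_pair (F := nbhs x1) (G := nbhs (x1, x2)) (H := nbhs x3)); last exact: cvg_cst.
by apply: (cvg_pair (F := nbhs x1) (G := nbhs x1) (H := nbhs x2)); [exact: cvg_id|exact: cvg_cst].
Qed.

Lemma cvg_line2 x : ((X1 x, t), X3 x) @[t --> X2 x] --> x.
Proof.
case: x => [[x1 x2] x3]; rewrite /X1 /X2 /X3 /=.
apply: (cvg_pair (F := nbhs x2) (G := nbhs (x1, x2)) (H := nbhs x3)); last exact: cvg_cst.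
by apply: (cvg_pair (F := nbhs x2) (G := nbhs x1) (H := nbhs x2)); [exact: cvg_cst|exact: cvg_id].
Qed.

Lemma cvg_line3 x : ((X1 x, X2 x), t) @[t --> X3 x] --> x.
Proof.
case: x => [[x1 x2] x3]; rewrite /X1 /X2 /X3 /=.
apply: (cvg_pair (F := nbhs x3) (G := nbhs (x1, x2)) (H := nbhs x3)); last exact: cvg_id.
exact: cvg_cst.
Qed.

Lemma cvg_X1 x : X1 y @[y --> x] --> X1 x.
Proof. exact: (cvg_comp _ _ cvg_fst cvg_fst). Qed.

Lemma cvg_X2 x : X2 y @[y --> x] --> X2 x.
Proof. exact: (cvg_comp _ _ cvg_fst cvg_snd). Qed.

Lemma cvg_X3 x : X3 y @[y --> x] --> X3 x.
Proof. exact: cvg_snd. Qed.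

Lemma tetra_near x : Omega x -> X1 x != 0 -> X2 x != 0 -> X3 x != 0 ->
  \forall y \near x, tetra (0 < X1 x) (0 < X2 x) (0 < X3 x) y.
Proof.
move=> xO x1 x2 x3.
set s1 := sgnb R (0 < X1 x); set s2 := sgnb R (0 < X2 x); set s3 := sgnb R (0 < X3 x).
have cvg_s1 : s1 * X1 y @[y --> x] --> s1 * X1 x by apply: cvgMr; exact: cvg_X1.
have cvg_s2 : s2 * X2 y @[y --> x] --> s2 * X2 x by apply: cvgMr; exact: cvg_X2.
have cvg_s3 : s3 * X3 y @[y --> x] --> s3 * X3 x by apply: cvgMr; exact: cvg_X3.
have lt1 : s1 * X1 x + s2 * X2 x + s3 * X3 x < 1 by rewrite !sgnb_gt0_mul.
near=> y; split; [|split; [|split]]; apply/ltW.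
- by near: y; apply: cvgr_gt cvg_s1 _ _; rewrite sgnb_gt0_mul normr_gt0.
- by near: y; apply: cvgr_gt cvg_s2 _ _; rewrite sgnb_gt0_mul normr_gt0.
- by near: y; apply: cvgr_gt cvg_s3 _ _; rewrite sgnb_gt0_mul normr_gt0.
- near: y; apply: cvgr_lt lt1; apply: cvgD; [apply: cvgD|]; assumption.
Unshelve. all: by end_near.
Qed.

Lemma derive1_quadratic_near (f : R -> R) (a A B C : R) :
  (\forall t \near a, f t = A + B * t + C * t ^+ 2) -> derive1 f a = B + 2 * C * a.
Proof.
move=> fE; rewrite derive1E (near_eq_derive _ fE).
have -> : (fun t => A + B * t + C * t ^+ 2) = horner (A%:P + B *: 'X + C *: 'X^2).
  by apply/funext => t; rewrite !hornerD !hornerZ hornerC hornerX hornerXn.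
rewrite -derive1E -derivE !derivD !derivZ derivC derivX derivXn /= !hornerE.
by field.
Qed.

Section partial_derivatives.
Variables (v : R * R * R -> R) (Q : quadratic) (x : R * R * R).
Hypothesis vQ : \forall y \near x, v y = qeval Q y.

Lemma derive1_line1 : derive1 (fun t => v ((t, X2 x), X3 x)) (X1 x) = qd1 Q x.
Proof.
rewrite (@derive1_quadratic_near _ _ (qc Q + q2 Q * X2 x + q3 Q * X3 x + q22 Q * X2 x ^+ 2
    + q33 Q * X3 x ^+ 2 + q23 Q * X2 x * X3 x) (q1 Q + q12 Q * X2 x + q13 Q * X3 x) (q11 Q)).
  by rewrite /qd1; ring.
have vQt : \forall t \near X1 x, v ((t, X2 x), X3 x) = qeval Q ((t, X2 x), X3 x) := cvg_line1 vQ.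
by apply: filterS vQt => t ->; rewrite /qeval /X1 /X2 /X3 /=; ring.
Qed.

Lemma derive1_line2 : derive1 (fun t => v ((X1 x, t), X3 x)) (X2 x) = qd2 Q x.
Proof.
rewrite (@derive1_quadratic_near _ _ (qc Q + q1 Q * X1 x + q3 Q * X3 x + q11 Q * X1 x ^+ 2
    + q33 Q * X3 x ^+ 2 + q13 Q * X1 x * X3 x) (q2 Q + q12 Q * X1 x + q23 Q * X3 x) (q22 Q)).
  by rewrite /qd2; ring.
have vQt : \forall t \near X2 x, v ((X1 x, t), X3 x) = qeval Q ((X1 x, t), X3 x) := cvg_line2 vQ.
by apply: filterS vQt => t ->; rewrite /qeval /X1 /X2 /X3 /=; ring.
Qed.

Lemma derive1_line3 : derive1 (fun t => v ((X1 x, X2 x), t)) (X3 x) = qd3 Q x.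
Proof.
rewrite (@derive1_quadratic_near _ _ (qc Q + q1 Q * X1 x + q2 Q * X2 x + q11 Q * X1 x ^+ 2
    + q22 Q * X2 x ^+ 2 + q12 Q * X1 x * X2 x) (q3 Q + q13 Q * X1 x + q23 Q * X2 x) (q33 Q)).
  by rewrite /qd3; ring.
have vQt : \forall t \near X3 x, v ((X1 x, X2 x), t) = qeval Q ((X1 x, X2 x), t) := cvg_line3 vQ.
by apply: filterS vQt => t ->; rewrite /qeval /X1 /X2 /X3 /=; ring.
Qed.
End partial_derivatives.

Definition octant_pt (b1 b2 b3 : bool) (a1 a2 a3 : R) : R * R * R :=
  ((sgnb R b1 * a1, sgnb R b2 * a2), sgnb R b3 * a3).

Lemma tetra_octant_pt b1 b2 b3 (a1 a2 a3 : R) :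
  0 <= a1 -> 0 <= a2 -> 0 <= a3 -> a1 + a2 + a3 <= 1 ->
  tetra b1 b2 b3 (octant_pt b1 b2 b3 a1 a2 a3).
Proof. by move=> *; rewrite /tetra /octant_pt /X1 /X2 /X3 /= !mulrA !sgnb_sqr !mul1r. Qed.

Lemma l1norm_octant_pt b1 b2 b3 (a1 a2 a3 : R) : 0 <= a1 -> 0 <= a2 -> 0 <= a3 ->
  l1norm (octant_pt b1 b2 b3 a1 a2 a3) = a1 + a2 + a3.
Proof.
by move=> *; rewrite /l1norm /octant_pt /X1 /X2 /X3 /= !normrM !normr_sgnb !mul1r !ger0_norm.
Qed.

Local Notation h := (2^-1 : R).

(* The left side is [s1 * s2 * s3] times the integral of the first partial derivative of [q]
   over the tetrahedron of the octant. By the divergence theorem and the edge-midpoint rule on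
   the faces (exact for quadratics), the outer face contributes the midpoints [(h,h,0)],
   [(h,0,h)], [(0,h,h)] and the face [x1 = 0] minus [(0,h,0)], [(0,0,h)], [(0,h,h)]. *)
Lemma quadratic_face_identity1 Q b1 b2 b3 :
  let s1 := sgnb R b1 in let s2 := sgnb R b2 in let s3 := sgnb R b3 in
  let q a1 a2 a3 := qeval Q (octant_pt b1 b2 b3 a1 a2 a3) in
  s1 * s2 * s3 * (q1 Q / 6 + (2 * q11 Q * s1 + q12 Q * s2 + q13 Q * s3) / 24)
  = s2 * s3 * (q h h 0 + q h 0 h - q 0 h 0 - q 0 0 h) / 6.
Proof.
by case: b1; case: b2; case: b3; rewrite /= /qeval /octant_pt /X1 /X2 /X3 /sgnb /=; field.
Qed.

Lemma quadratic_face_identity2 Q b1 b2 b3 :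
  let s1 := sgnb R b1 in let s2 := sgnb R b2 in let s3 := sgnb R b3 in
  let q a1 a2 a3 := qeval Q (octant_pt b1 b2 b3 a1 a2 a3) in
  s1 * s2 * s3 * (q2 Q / 6 + (q12 Q * s1 + 2 * q22 Q * s2 + q23 Q * s3) / 24)
  = s1 * s3 * (q h h 0 + q 0 h h - q h 0 0 - q 0 0 h) / 6.
Proof.
by case: b1; case: b2; case: b3; rewrite /= /qeval /octant_pt /X1 /X2 /X3 /sgnb /=; field.
Qed.

Lemma quadratic_face_identity3 Q b1 b2 b3 :
  let s1 := sgnb R b1 in let s2 := sgnb R b2 in let s3 := sgnb R b3 in
  let q a1 a2 a3 := qeval Q (octant_pt b1 b2 b3 a1 a2 a3) in
  s1 * s2 * s3 * (q3 Q / 6 + (q13 Q * s1 + q23 Q * s2 + 2 * q33 Q * s3) / 24)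
  = s1 * s2 * (q h 0 h + q 0 h h - q h 0 0 - q 0 h 0) / 6.
Proof.
by case: b1; case: b2; case: b3; rewrite /= /qeval /octant_pt /X1 /X2 /X3 /sgnb /=; field.
Qed.

Section face_fluxes.
Variables (v : R * R * R -> R) (Q : quadratic) (b1 b2 b3 : bool).
Hypotheses (vQ : forall x, tetra b1 b2 b3 x -> v x = qeval Q x) (v_bd : zero_on_bd v).
Local Notation pt := (octant_pt b1 b2 b3).
Local Notation s1 := (sgnb R b1).
Local Notation s2 := (sgnb R b2).
Local Notation s3 := (sgnb R b3).

Let qeval_inner a1 a2 a3 : 0 <= a1 -> 0 <= a2 -> 0 <= a3 -> a1 + a2 + a3 <= 1 ->
  qeval Q (pt a1 a2 a3) = v (pt a1 a2 a3).
Proof. by move=> *; rewrite vQ //; apply: tetra_octant_pt. Qed.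

Let qeval_outer a1 a2 a3 : 0 <= a1 -> 0 <= a2 -> 0 <= a3 -> a1 + a2 + a3 = 1 ->
  qeval Q (pt a1 a2 a3) = 0.
Proof.
move=> a1_ge0 a2_ge0 a3_ge0 a_sum; rewrite qeval_inner ?a_sum //.
by apply: v_bd; rewrite -/(l1norm _) l1norm_octant_pt.
Qed.

Let q100 : qeval Q (pt h 0 0) = v (pt h 0 0). Proof. by apply: qeval_inner; lra. Qed.
Let q010 : qeval Q (pt 0 h 0) = v (pt 0 h 0). Proof. by apply: qeval_inner; lra. Qed.
Let q001 : qeval Q (pt 0 0 h) = v (pt 0 0 h). Proof. by apply: qeval_inner; lra. Qed.
Let q110 : qeval Q (pt h h 0) = 0. Proof. by apply: qeval_outer; lra. Qed.
Let q101 : qeval Q (pt h 0 h) = 0. Proof. by apply: qeval_outer; lra. Qed.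
Let q011 : qeval Q (pt 0 h h) = 0. Proof. by apply: qeval_outer; lra. Qed.

Lemma face_flux1 :
  s1 * s2 * s3 * (q1 Q / 6 + (2 * q11 Q * s1 + q12 Q * s2 + q13 Q * s3) / 24)
  = - (s2 * s3 * (v (pt 0 h 0) + v (pt 0 0 h))) / 6.
Proof. by rewrite quadratic_face_identity1 /= q110 q101 q010 q001; ring. Qed.

Lemma face_flux2 :
  s1 * s2 * s3 * (q2 Q / 6 + (q12 Q * s1 + 2 * q22 Q * s2 + q23 Q * s3) / 24)
  = - (s1 * s3 * (v (pt h 0 0) + v (pt 0 0 h))) / 6.
Proof. by rewrite quadratic_face_identity2 /= q110 q011 q100 q001; ring. Qed.

Lemma face_flux3 :
  s1 * s2 * s3 * (q3 Q / 6 + (q13 Q * s1 + q23 Q * s2 + 2 * q33 Q * s3) / 24)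
  = - (s1 * s2 * (v (pt h 0 0) + v (pt 0 h 0))) / 6.
Proof. by rewrite quadratic_face_identity3 /= q101 q011 q100 q010; ring. Qed.
End face_fluxes.

Lemma qbar_octa_affine x : qbar x =
  octa_affine (fun b1 b2 b3 => sgnb R b1 * sgnb R b2 * sgnb R b3)
    (fun _ _ _ => 0) (fun _ _ _ => 0) (fun _ _ _ => 0) x.
Proof.
rewrite /qbar /octa_affine; case: ifP => [/and3P[n1 n2 n3]|].
  by rewrite /= !sgr_sgnb // !mul0r !addr0.
move=> /negbT; rewrite !negb_and !negbK => /or3P[] /eqP ->; by rewrite sgr0 ?mulr0 ?mul0r.
Qed.

Lemma qbar_sqr_octa_affine x : qbar x ^+ 2 =
  octa_affine (fun _ _ _ => 1) (fun _ _ _ => 0) (fun _ _ _ => 0) (fun _ _ _ => 0) x.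
Proof.
rewrite qbar_octa_affine /octa_affine; case: ifP => _ /=; last by rewrite expr0n.
by rewrite !mul0r !addr0 !exprMn !expr2 !sgnb_sqr !mulr1.
Qed.

Lemma interior_tetra_sgnb b1 b2 b3 x : interior (tetra b1 b2 b3) x ->
  [/\ 0 < sgnb R b1 * X1 x, 0 < sgnb R b2 * X2 x & 0 < sgnb R b3 * X3 x].
Proof.
move=> xT; split; apply: near_sgnb_gt0.
- have : \forall t \near X1 x, tetra b1 b2 b3 ((t, X2 x), X3 x) := cvg_line1 xT.
  by apply: filterS => t [].
- have : \forall t \near X2 x, tetra b1 b2 b3 ((X1 x, t), X3 x) := cvg_line2 xT.
  by apply: filterS => t [_ []].
- have : \forall t \near X3 x, tetra b1 b2 b3 ((X1 x, X2 x), t) := cvg_line3 xT.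
  by apply: filterS => t [_ [_ []]].
Qed.

Lemma qbar_interior_tetra b1 b2 b3 x : interior (tetra b1 b2 b3) x ->
  qbar x = sgnb R b1 * sgnb R b2 * sgnb R b3.
Proof.
by case/interior_tetra_sgnb => /sgnb_mul_gt0_sgr s1 /sgnb_mul_gt0_sgr s2 /sgnb_mul_gt0_sgr s3;
  rewrite /qbar s1 s2 s3.
Qed.

Section divergence.
Variables (v1 v2 v3 : R * R * R -> R) (Q1 Q2 Q3 : bool -> bool -> bool -> quadratic).
Hypotheses (vQ1 : forall b1 b2 b3 x, tetra b1 b2 b3 x -> v1 x = qeval (Q1 b1 b2 b3) x)
           (vQ2 : forall b1 b2 b3 x, tetra b1 b2 b3 x -> v2 x = qeval (Q2 b1 b2 b3) x)
           (vQ3 : forall b1 b2 b3 x, tetra b1 b2 b3 x -> v3 x = qeval (Q3 b1 b2 b3) x).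

Let sgn3 b1 b2 b3 := sgnb R b1 * sgnb R b2 * sgnb R b3.

Let C0 b1 b2 b3 := sgn3 b1 b2 b3 *
  (q1 (Q1 b1 b2 b3) + q2 (Q2 b1 b2 b3) + q3 (Q3 b1 b2 b3)).
Let C1 b1 b2 b3 := sgn3 b1 b2 b3 * sgnb R b1 *
  (2 * q11 (Q1 b1 b2 b3) + q12 (Q2 b1 b2 b3) + q13 (Q3 b1 b2 b3)).
Let C2 b1 b2 b3 := sgn3 b1 b2 b3 * sgnb R b2 *
  (q12 (Q1 b1 b2 b3) + 2 * q22 (Q2 b1 b2 b3) + q23 (Q3 b1 b2 b3)).
Let C3 b1 b2 b3 := sgn3 b1 b2 b3 * sgnb R b3 *
  (q13 (Q1 b1 b2 b3) + q23 (Q2 b1 b2 b3) + 2 * q33 (Q3 b1 b2 b3)).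

Lemma div3_qbar_octa_affine x :
  Omega x -> div3 v1 v2 v3 x * qbar x = octa_affine C0 C1 C2 C3 x.
Proof.
move=> xO; rewrite qbar_octa_affine /octa_affine; case: ifP => [/and3P[n1 n2 n3]|]; last first.
  by rewrite mulr0.
have near_tetra := tetra_near xO n1 n2 n3.
set b1 := 0 < X1 x; set b2 := 0 < X2 x; set b3 := 0 < X3 x.
rewrite /div3 (derive1_line1 (filterS (@vQ1 b1 b2 b3) near_tetra))
  (derive1_line2 (filterS (@vQ2 b1 b2 b3) near_tetra))
  (derive1_line3 (filterS (@vQ3 b1 b2 b3) near_tetra)) /=.
rewrite /qd1 /qd2 /qd3 /C0 /C1 /C2 /C3 /sgn3.
set a1 := `|X1 x|; set a2 := `|X2 x|; set a3 := `|X3 x|.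
rewrite -[X1 x]sgnb_gt0_mul_norm -[X2 x]sgnb_gt0_mul_norm -[X3 x]sgnb_gt0_mul_norm.
by rewrite -/b1 -/b2 -/b3 -/a1 -/a2 -/a3; ring.
Qed.
Hypotheses (v1_bd : zero_on_bd v1) (v2_bd : zero_on_bd v2) (v3_bd : zero_on_bd v3).

Let face_terms b1 b2 b3 : R :=
  let s1 := sgnb R b1 in let s2 := sgnb R b2 in let s3 := sgnb R b3 in
  let pt := octant_pt b1 b2 b3 in
  - (s2 * s3 * (v1 (pt 0 h 0) + v1 (pt 0 0 h))) / 6
  + - (s1 * s3 * (v2 (pt h 0 0) + v2 (pt 0 0 h))) / 6
  + - (s1 * s2 * (v3 (pt h 0 0) + v3 (pt 0 h 0))) / 6.

Let octant_flux b1 b2 b3 :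
  C0 b1 b2 b3 / 6 + (C1 b1 b2 b3 + C2 b1 b2 b3 + C3 b1 b2 b3) / 24 = face_terms b1 b2 b3.
Proof.
rewrite /face_terms /= -(face_flux1 (@vQ1 b1 b2 b3) v1_bd) -(face_flux2 (@vQ2 b1 b2 b3) v2_bd).
by rewrite -(face_flux3 (@vQ3 b1 b2 b3) v3_bd) /C0 /C1 /C2 /C3 /sgn3; ring.
Qed.

(* [v1 (pt 0 h 0)] depends on [b2] only, and its factor [s2 * s3] sums to [0] over [b3];
   likewise for the other five terms. *)
Let sum_face_terms : \sum_(b1 : bool) \sum_(b2 : bool) \sum_(b3 : bool) face_terms b1 b2 b3 = 0.
Proof.
rewrite !big_bool /face_terms /octant_pt /sgnb /= !mul1r !mulN1r !oppr0.
ring.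
Qed.

Lemma integral_div3_qbar :
  (\int[@leb3 R]_(x in Omega) (div3 v1 v2 v3 x * qbar x)%:E = 0)%E.
Proof.
transitivity (\int[@leb3 R]_(x in Omega) (octa_affine C0 C1 C2 C3 x)%:E)%E.
  by apply: eq_integral => x /[!inE] xO; rewrite div3_qbar_octa_affine.
rewrite integral_octa_affine; congr EFin; rewrite -[RHS]sum_face_terms.
by apply: eq_bigr => b1 _; apply: eq_bigr => b2 _; apply: eq_bigr => b3 _; exact: octant_flux.
Qed.
End divergence.
End quadratics.

Theorem proposition3p2 (R : realType) :
  (* qbar is piecewise constant on the mesh *)
  (forall b1 b2 b3 : bool, exists c : R,
      forall x, interior (tetra b1 b2 b3) x -> qbar x = c) /\
  (* qbar in L^2_0(Omega) *)
  measurable_fun (@Omega R) (@qbar R) /\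
  (@leb3 R).-integrable (@Omega R) (fun x => ((qbar x) ^+ 2)%:E) /\
  (\int[@leb3 R]_(x in @Omega R) (qbar x)%:E = 0)%E /\
  (* orthogonality to divergences of L^1_2 \cap W^{1,1}_0 vector fields *)
  (forall v1 v2 v3 : R * R * R -> R,
      L12 v1 -> L12 v2 -> L12 v3 ->
      zero_on_bd v1 -> zero_on_bd v2 -> zero_on_bd v3 ->
      (\int[@leb3 R]_(x in @Omega R) (div3 v1 v2 v3 x * qbar x)%:E = 0)%E).
Proof.
have qbarE := funext (@qbar_octa_affine R).
split; first by move=> b1 b2 b3; eexists => x; exact: qbar_interior_tetra.
split.
  rewrite qbarE; apply/measurable_EFinP.
  exact: measurable_int (integrable_octa_affine _ _ _ _).
split; first by under eq_fun do rewrite qbar_sqr_octa_affine; exact: integrable_octa_affine.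
split; first by rewrite qbarE integral_octa_affine !big_bool /sgnb /=; congr EFin; field.
move=> v1 v2 v3 /L12_quadratic[Q1 vQ1] /L12_quadratic[Q2 vQ2] /L12_quadratic[Q3 vQ3].
exact: (integral_div3_qbar vQ1 vQ2 vQ3).
Qed.
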